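(* Let $n, r$ be positive integers. Then $$m\big(L(K_n),r\big)=\begin{cases}\left\lfloor\dfrac{(r+2)^2}{8}\right\rfloor, & \text{if } n\geqslant\lceil r/2\rceil+2;\\[2mm] \dbinom{n}{2}, & \text{otherwise.}\end{cases}$$
   Context: All graphs are finite, simple and undirected. For a nonnegative integer $r$ and a graph $G$, the $r$-neighbor bootstrap percolation process on $G$ starts with a set $A_0\subseteq V(G)$ of initially active vertices, and for $i\geqslant 1$, $A_i=A_{i-1}\cup\{v\in V(G) : |N(v)\cap A_{i-1}|\geqslant r\}$, where $N(v)$ is the set of neighbors of $v$. The set $A_0$ is a percolating set if $\bigcup_{i\geqslant 0}A_i=V(G)$. $m(G,r)$ denotes the minimum size of a percolating set. $L(G)$ is the line graph of $G$: its vertex set is $E(G)$ and two vertices are adjacent iff the corresponding edges share an endpoint. $K_n$ is the complete graph on $n$ vertices. *)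

From mathcomp Require Import all_boot.
Set Implicit Arguments. Unset Strict Implicit. Unset Printing Implicit Defensive.

(* A finite simple graph is a vertex finType T with an adjacency relation e
   (assumed symmetric and irreflexive where relevant).  N(v) = [set u | e v u]. *)

Section Bootstrap.
Variable T : finType.
Variable e : rel T.

Definition bp_step (r : nat) (A : {set T}) : {set T} :=
  A :|: [set v | r <= #|[set u | e v u & u \in A]|].

Definition bp_iter (r : nat) (A : {set T}) (i : nat) : {set T} :=
  iter i (bp_step r) A.

Definition percolating (r : nat) (A : {set T}) : Prop :=
  forall v : T, exists i : nat, v \in bp_iter r A i.

Definition min_percolating_size (r k : nat) : Prop :=
  (exists A : {set T}, percolating r A /\ #|A| = k) /\
  (forall A : {set T}, percolating r A -> k <= #|A|).

Definition is_edge (A : {set T}) : bool :=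
  [exists x, exists y, e x y && (A == [set x; y])].

Definition line_vertex := {A : {set T} | is_edge A}.

Definition line_rel : rel line_vertex :=
  fun A B => (val A != val B) && (val A :&: val B != set0).

End Bootstrap.

Definition K_rel (n : nat) : rel 'I_n := fun x y => x != y.

From mathcomp Require Import all_boot zify.
Set Implicit Arguments. Unset Strict Implicit. Unset Printing Implicit Defensive.

(* Work in L(K_S), whose vertices are the 2-subsets of S.
   Lower bound: if A percolates with threshold r and is not already everything,
   some edge e = xy becomes active in the first round, so A contains r edges
   meeting e.  Deleting x and y, every remaining edge loses at most four
   neighbours, so the edges of A avoiding x and y percolate in K_{S-x-y} with
   threshold r - 4.  Hence |A| >= r + [mLK (r - 4) (|S| - 2)], which unrolls to
   floor((r+2)^2/8) (or to C(|S|,2) when every edge is needed).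
   Upper bound: with M = ceil(r/2) and D = n - M, take on {0,...,n-1} the
   pairs {a,b} with b - a >= D and, for even r, the pairs {a,a+1} with a odd
   and a <= M.  The edges at the least vertex s become active in the order
   {s,s+1}, {s,s+2}, ..., since {s,j} sees {s,z} for s < z < j and z >= s + D,
   {j,z} for z >= j + D, and the short pair at j.  Once they are all active,
   deleting s lowers the threshold by exactly 2, and we recurse on s + 1. *)

Lemma cardsU_disj (T : finType) (A B : {set T}) :
  (forall x, x \in A -> x \notin B) -> #|A :|: B| = #|A| + #|B|.
Proof.
move=> AnB; rewrite cardsU (_ : A :&: B = set0) ?cards0 ?subn0 //.
by apply/setP => x; rewrite !inE; apply/negP => /andP[/AnB/negP].
Qed.

Lemma card2_set2 (T : finType) (g : {set T}) x y :
  #|g| = 2 -> x \in g -> y \in g -> x != y -> g = [set x; y].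
Proof.
move=> g2 xg yg xy; apply/eqP; rewrite eq_sym eqEcard cards2 xy g2 andbT.
by apply/subsetP => z; rewrite !inE => /orP[]/eqP->.
Qed.

Lemma card_ord_pred n (P : pred nat) : #|[set z : 'I_n | P z]| = count P (iota 0 n).
Proof.
by rewrite cardsE cardE /enum_mem size_filter -enumT -val_enum_ord count_map.
Qed.

Lemma card_ord_range n a b : #|[set z : 'I_n | a <= z < b]| = minn b n - a.
Proof.
rewrite (card_ord_pred n (fun z => a <= z < b)).
elim: n => [|n IHn]; first by rewrite minn0.
rewrite -addn1 iotaD count_cat IHn /= addn0.
by case: (leqP a n) => ?; case: (ltnP n b) => ? /=; lia.
Qed.

Lemma card_ord_ge n a : #|[set z : 'I_n | a <= z]| = n - a.
Proof.
rewrite -[n in RHS]minnn -card_ord_range.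
by apply: eq_card => z; rewrite !inE ltn_ord andbT.
Qed.

Lemma card_ord_odd_le n m : #|[set z : 'I_n | odd z && (z <= m)]| <= uphalf m.
Proof.
rewrite (card_ord_pred n (fun z => odd z && (z <= m))).
have -> : count (fun z => odd z && (z <= m)) (iota 0 n) = uphalf (minn n m.+1).-1.
  elim: n => [//|n IHn]; rewrite -addn1 iotaD count_cat IHn /= addn0 !uphalfE.
  by case: (leqP n m) => nm; rewrite ?andbT ?andbF; [rewrite -!divn2 -modn2|]; lia.
by apply: uphalf_leq; lia.
Qed.

Lemma set2_ltn_inj m (a b c d : 'I_m) :
  a < b -> c < d -> [set a; b] = [set c; d] -> a = c /\ b = d.
Proof.
move=> ab cd E.
have incd u : u \in [set a; b] -> (u == c) || (u == d) by rewrite E !inE.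
have inab u : u \in [set c; d] -> (u == a) || (u == b) by rewrite -E !inE.
have /incd/orP[/eqP ac|/eqP ad] := set21 a b.
  split=> //; have /incd/orP[/eqP bc|/eqP //] := set22 a b.
  by move: ab; rewrite ac bc ltnn.
have /inab/orP[/eqP ca|/eqP cb] := set21 c d.
  by move: cd; rewrite ca -ad ltnn.
by move: cd; rewrite cb -ad => /(ltn_trans ab); rewrite ltnn.
Qed.

Definition mLK_large r := (r + 2) ^ 2 %/ 8.
Definition mLK r k := if (r.+1 %/ 2).+2 <= k then mLK_large r else 'C(k, 2).

Lemma bin2_mul2 k : 'C(k, 2) * 2 = k * k.-1.
Proof. by rewrite bin2 -divn2 divnK // dvdn2 oddM; case: k => //= k; rewrite andNb. Qed.

Lemma mLK_large_small r : r < 4 -> mLK_large r <= r.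
Proof. by case: r => [|[|[|[|r]]]]. Qed.

Lemma mLK_large_rec r : 4 <= r -> mLK_large r = r + mLK_large (r - 4).
Proof.
move=> r4; rewrite /mLK_large -(subnK r4) addnK; set t := r - 4.
by rewrite (_ : (t + 4 + 2) ^ 2 = (t + 4) * 8 + (t + 2) ^ 2) ?divnMDl //; nia.
Qed.

Lemma bin2_uphalf_le r :
  'C((r.+1 %/ 2).+1, 2) + ~~ odd r * uphalf (r.+1 %/ 2) <= mLK_large r.
Proof.
rewrite /mLK_large leq_divRL // mulnDl.
have := bin2_mul2 (r.+1 %/ 2).+1; have := leq_divM (r.+1 %/ 2).+1 2.
have -> : r + 2 = (r.+1 %/ 2).*2 + ~~ odd r + 1.
  by have := modn2 r; case: (odd r) => /=; lia.
rewrite uphalfE -divn2 -muln2.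
move: (odd r) ('C((r.+1 %/ 2).+1, 2)) ((r.+1 %/ 2).+1 %/ 2) (r.+1 %/ 2) => o C h m /=.
by case: o => /=; nia.
Qed.

Lemma mLK_large_le_bin r k : (r.+1 %/ 2).+2 <= k -> mLK_large r <= 'C(k, 2).
Proof.
move=> rk; rewrite /mLK_large -ltnS ltn_divLR //.
by have := bin2_mul2 k; case: k rk => [//|k] /= rk; nia.
Qed.

Lemma mLK_le_bin r k : mLK r k <= 'C(k, 2).
Proof. by rewrite /mLK; case: ifP => // /mLK_large_le_bin. Qed.

Lemma mLK0 k : mLK 0 k = 0.
Proof. by rewrite /mLK; case: ifP => //; case: k => [|[|k]]. Qed.

Lemma mLK_rec r k : 0 < r -> 2 <= k -> mLK r k <= r + mLK (r - 4) (k - 2).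
Proof.
move=> r0 k2; rewrite /mLK; have [r4|r4] := ltnP r 4.
  rewrite (_ : r - 4 = 0); last lia.
  case: ifP => [_|]; first exact: leq_trans (mLK_large_small r4) (leq_addr _ _).
  by case: r r0 r4 => [|[|[|[|r]]]] //= _ _; case: k k2 => [|[|[|[|k]]]].
have -> : ((r - 4).+1 %/ 2).+2 <= k - 2 = ((r.+1 %/ 2).+2 <= k) by lia.
case: ifP => rk; first by rewrite mLK_large_rec.
move: rk; rewrite -(subnK k2) addnK !addn2 !binS bin1 bin0 => rk; lia.
Qed.

Section LineGraphOfComplete.
Variable T : finType.
Implicit Types (S W Z Zx Zy : {set T}) (A B : {set {set T}}) (e f g : {set T}).

Definition K_edges S : {set {set T}} := [set e : {set T} | (e \subset S) && (#|e| == 2)].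

Definition line_adj e f := (e != f) && (e :&: f != set0).

Definition lineK_step S r A : {set {set T}} :=
  A :|: [set e in K_edges S | r <= #|[set f in A | line_adj e f]|].

Definition lineK_iter S r A k := iter k (lineK_step S r) A.

Definition lineK_percolating S r A :=
  forall e, e \in K_edges S -> exists k, e \in lineK_iter S r A k.

Lemma K_edgesP S e : reflect (e \subset S /\ #|e| = 2) (e \in K_edges S).
Proof. by rewrite inE; apply: (iffP andP) => -[-> /eqP ->]. Qed.

Lemma lineK_iterS S r A k :
  lineK_iter S r A k.+1 = lineK_step S r (lineK_iter S r A k).
Proof. by []. Qed.

Lemma lineK_iter_mono S r A : {homo lineK_iter S r A : k l / k <= l >-> k \subset l}.
Proof.
apply: homo_leq => [//|? ? ?|k]; first exact: subset_trans.
by rewrite lineK_iterS subsetUl.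
Qed.

Lemma sub_lineK_iter S r A k : A \subset lineK_iter S r A k.
Proof. exact: (lineK_iter_mono _ _ _ (leq0n k)). Qed.

Lemma lineK_iter_sub S r A k :
  A \subset K_edges S -> lineK_iter S r A k \subset K_edges S.
Proof.
move=> AS; elim: k => [|k IHk] //; rewrite lineK_iterS subUset IHk /=.
by apply/subsetP => e; rewrite inE => /andP[].
Qed.

Lemma K_edgesS : {homo K_edges : S1 S2 / S1 \subset S2}.
Proof.
move=> S1 S2 S12; apply/subsetP => e; rewrite !inE => /andP[eS ->].
by rewrite (subset_trans eS S12).
Qed.

Lemma set2_K_edges S x y :
  ([set x; y] \in K_edges S) = [&& x \in S, y \in S & x != y].
Proof. by rewrite inE subUset !sub1set cards2 andbA; case: (x != y). Qed.

Lemma line_adj_set2 x y z : y != x -> y != z -> line_adj [set x; y] [set x; z].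
Proof.
move=> yx yz; apply/andP; split; last by apply/set0Pn; exists x; rewrite !inE eqxx.
by apply/eqP => /setP/(_ y); rewrite !inE eqxx (negbTE yx) (negbTE yz).
Qed.

Lemma line_adj_restrict S W B f :
  B \subset K_edges S -> f \in K_edges (S :\: W) ->
  [set g in B | line_adj f g] \subset
    [set g in B :&: K_edges (S :\: W) | line_adj f g] :|: [set [set p; z] | p in f, z in W].
Proof.
move=> BS fSW; apply/subsetP => g; rewrite inE => /andP[gB fg].
rewrite in_setU inE in_setI gB fg andbT /=.
case: (boolP (g \in K_edges (S :\: W))) => //= gSW.
have /K_edgesP[gS g2] := subsetP BS g gB.
have [z zg zSW] : exists2 z, z \in g & z \notin S :\: W.
  by apply/subsetPn; apply: contra gSW => gSW; apply/K_edgesP.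
have zW : z \in W by move: zSW; rewrite in_setD (subsetP gS) // andbT negbK.
case/andP: fg => _ /set0Pn[p]; rewrite inE => /andP[pf pg].
have /K_edgesP[/subsetP/(_ p pf) pSW _] := fSW.
have pz : p != z by apply: contraNneq zSW => <-.
by apply/imset2P; exists p z => //; apply: card2_set2.
Qed.

Lemma lineK_iter_restrict S W r A k :
  A \subset K_edges S ->
  lineK_iter S r A k :&: K_edges (S :\: W)
    \subset lineK_iter (S :\: W) (r - 2 * #|W|) (A :&: K_edges (S :\: W)) k.
Proof.
move=> AS; elim: k => [//|k IHk]; rewrite !lineK_iterS.
set B := lineK_iter S r A k; set B' := lineK_iter _ _ _ k.
apply/subsetP => f; rewrite in_setI => /andP[+ fSW]; rewrite in_setU => /orP[fB|].
  by rewrite in_setU (subsetP IHk) // in_setI fB fSW.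
rewrite inE => /andP[_ rf]; rewrite in_setU inE fSW /=; apply/orP; right.
have /K_edgesP[_ f2] := fSW.
have lost : #|[set [set p; z] | p in f, z in W]| <= 2 * #|W|.
  by rewrite curry_imset2X -f2 -cardsX leq_imset_card.
have kept : [set g in B :&: K_edges (S :\: W) | line_adj f g] \subset [set g in B' | line_adj f g].
  by apply/subsetP => g /setIdP[gBK fg]; rewrite inE (subsetP IHk g gBK) fg.
rewrite leq_subLR addnC; apply: leq_trans rf _.
apply: leq_trans (subset_leq_card (line_adj_restrict (lineK_iter_sub r k AS) fSW)) _.
exact: leq_trans (leq_card_setU _ _).1 (leq_add (subset_leq_card kept) lost).
Qed.

Lemma card_line_adj_restrict S A e :
  #|[set f in A | line_adj e f]| + #|A :&: K_edges (S :\: e)| <= #|A|.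
Proof.
rewrite -cardsU_disj; last first.
  move=> f; rewrite !inE => /andP[_ /andP[_ /set0Pn[z]]]; rewrite inE => /andP[ze zf].
  by rewrite negb_and; apply/orP; right; apply/negP => /andP[/subsetP/(_ z zf)]; rewrite inE ze.
by apply/subset_leq_card/subsetP => f; rewrite !inE => /orP[]/andP[].
Qed.

Lemma lineK_iter_stable S r A k : lineK_step S r A \subset A -> lineK_iter S r A k = A.
Proof.
move=> stA; elim: k => [//|k IHk].
by rewrite lineK_iterS IHk; apply/eqP; rewrite eqEsubset stA subsetUl.
Qed.

Lemma lineK_percolating_card S r A :
  A \subset K_edges S -> lineK_percolating S r A -> mLK r #|S| <= #|A|.
Proof.
elim/ltn_ind: r S A => r IHr S A AS percA.
case: (boolP (lineK_step S r A \subset A)) => [stA|].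
  have SA : K_edges S \subset A.
    by apply/subsetP => e /percA[k]; rewrite lineK_iter_stable.
  by rewrite (leq_trans (mLK_le_bin _ _)) // -cards_draws (subset_leq_card SA).
case/subsetPn => e; rewrite in_setU => /orP[->//|]; rewrite inE => /andP[eS re] _.
have [->|r0] := posnP r; first by rewrite mLK0.
have /K_edgesP[eSS e2] := eS.
set A' := A :&: K_edges (S :\: e).
have percA' : lineK_percolating (S :\: e) (r - 2 * #|e|) A'.
  move=> f fSe; have [k fk] := percA f (subsetP (K_edgesS (subsetDl S e)) f fSe).
  by exists k; apply: (subsetP (lineK_iter_restrict e r k AS)); rewrite inE fk.
have IHe := IHr _ _ (S :\: e) A' (subsetIr _ _) percA'; rewrite e2 in IHe.
have cSe : #|S :\: e| = #|S| - 2 by rewrite cardsD (setIidPr eSS) e2.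
have S2 : 2 <= #|S| by rewrite -e2 subset_leq_card.
apply: leq_trans (mLK_rec r0 S2) (leq_trans _ (card_line_adj_restrict S A e)).
by rewrite -cSe leq_add // IHe //; lia.
Qed.

Lemma card_star (x : T) Z : x \notin Z -> #|[set [set x; z] | z in Z]| = #|Z|.
Proof.
move=> xZ; apply: card_in_imset => z1 z2 z1Z _ /setP/(_ z1).
rewrite !inE eqxx orbT => /esym/orP[/eqP z1x|/eqP //].
by move: xZ; rewrite -z1x z1Z.
Qed.

Lemma card_line_adj_stars B (x y : T) Zx Zy :
  x != y -> x \notin Zx :|: Zy -> y \notin Zx :|: Zy ->
  (forall z, z \in Zx -> [set x; z] \in B) -> (forall z, z \in Zy -> [set y; z] \in B) ->
  #|Zx| + #|Zy| <= #|[set g in B | line_adj [set x; y] g]|.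
Proof.
rewrite !in_setU !negb_or => xy /andP[xZx xZy] /andP[yZx yZy] BZx BZy.
rewrite -(card_star xZx) -(card_star yZy) -cardsU_disj; last first.
  move=> _ /imsetP[z1 z1Zx ->]; apply/imsetP => -[z2 z2Zy /setP/(_ x)].
  rewrite !inE eqxx (negbTE xy) /= => /esym/eqP xz2.
  by move: xZy; rewrite xz2 z2Zy.
apply/subset_leq_card/subsetP => _ /setUP[] /imsetP[z zZ ->]; rewrite inE.
  rewrite BZx //= line_adj_set2 //; first by rewrite eq_sym.
  by apply: contraNneq yZx => ->.
rewrite BZy //= setUC line_adj_set2 //.
by apply: contraNneq xZy => ->.
Qed.

Lemma card_line_adj_apex B' B f (x : T) :
  B' \subset B -> (forall g, g \in B' -> x \notin g) -> x \notin f ->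
  (forall z, z \in f -> [set x; z] \in B) ->
  #|[set g in B' | line_adj f g]| + #|f| <= #|[set g in B | line_adj f g]|.
Proof.
move=> B'B xB' xf Bxf; rewrite -(card_star xf) -cardsU_disj; last first.
  by move=> g /setIdP[/xB' xg _]; apply/imsetP => -[z _ gE]; rewrite gE set21 in xg.
apply/subset_leq_card/subsetP => g /setUP[/setIdP[gB' fg]|/imsetP[z zf ->]].
  by rewrite inE (subsetP B'B) ?fg.
rewrite inE Bxf //=; apply/andP; split.
  by apply: contraNneq xf => ->; rewrite set21.
by apply/set0Pn; exists z; rewrite !inE zf eqxx orbT.
Qed.

Lemma lineK_iter_del1 S (x : T) r A K :
  (forall y, y \in S -> y != x -> [set x; y] \in lineK_iter S r A K) ->
  forall i, lineK_iter (S :\ x) (r - 2) (A :&: K_edges (S :\ x)) i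
              \subset lineK_iter S r A (K + i).
Proof.
move=> starx; elim=> [|i IHi].
  by rewrite addn0; apply: subset_trans (subsetIl _ _) (sub_lineK_iter _ _ _ _).
rewrite addnS !lineK_iterS; apply/subsetP => f /setUP[fB'|].
  by apply/setUP; left; apply: (subsetP IHi).
rewrite inE => /andP[fSx rf]; apply/setUP; right.
have /K_edgesP[fsub f2] := fSx.
rewrite inE (subsetP (K_edgesS (subD1set S x)) f fSx) /=.
have xB' g : g \in lineK_iter (S :\ x) (r - 2) (A :&: K_edges (S :\ x)) i -> x \notin g.
  move=> /(subsetP (lineK_iter_sub _ _ (subsetIr _ _)))/K_edgesP[gsub _].
  by apply/negP => /(subsetP gsub); rewrite !inE eqxx.
have xf : x \notin f by apply/negP => /(subsetP fsub); rewrite !inE eqxx.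
have Bxf z : z \in f -> [set x; z] \in lineK_iter S r A (K + i).
  move=> /(subsetP fsub); rewrite !inE => /andP[zx zS].
  exact: subsetP (lineK_iter_mono _ _ _ (leq_addr i K)) _ (starx z zS zx).
apply: leq_trans (card_line_adj_apex IHi xB' xf Bxf).
by rewrite f2 addnC -leq_subLR.
Qed.

Lemma lineK_percolating_del1 S (x : T) r A K :
  (forall y, y \in S -> y != x -> [set x; y] \in lineK_iter S r A K) ->
  lineK_percolating (S :\ x) (r - 2) (A :&: K_edges (S :\ x)) -> lineK_percolating S r A.
Proof.
move=> starx percx e eS.
have /K_edgesP[eSS /eqP/cards2P[a [b [ab eab]]]] := eS.
have [aS bS] : a \in S /\ b \in S by rewrite !(subsetP eSS) // eab !inE eqxx ?orbT.
case: (boolP (x \in e)) => [|xe].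
  rewrite eab !inE => /orP[]/eqP xE; exists K; subst x.
    by apply: starx; rewrite // eq_sym.
  by rewrite setUC; apply: starx.
have [i ei] : exists i, e \in lineK_iter (S :\ x) (r - 2) (A :&: K_edges (S :\ x)) i.
  apply: percx; rewrite eab set2_K_edges ab !inE aS bS !andbT.
  by apply/andP; split; apply: contraNneq xe => <-; rewrite eab !inE eqxx ?orbT.
by exists (K + i); apply: (subsetP (lineK_iter_del1 starx i)).
Qed.

End LineGraphOfComplete.

Section Construction.
Variables n r : nat.
Local Notation M := (r.+1 %/ 2).
Local Notation D := (n - M).

Definition long_pair (p : 'I_n * 'I_n) := p.1 + D <= p.2.
Definition short_pair (p : 'I_n * 'I_n) :=
  [&& ~~ odd r, p.2 == p.1.+1 :> nat, odd p.1 & p.1 <= M].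

Definition seed : {set {set 'I_n}} :=
  [set [set p.1; p.2] | p in [set p | long_pair p || short_pair p]].

Definition tail s := [set z : 'I_n | s <= z].
Definition seed_from s := seed :&: K_edges (tail s).

Hypothesis hn : M.+2 <= n.

Lemma seed_long (a b : 'I_n) : a + D <= b -> [set a; b] \in seed.
Proof. by move=> ab; apply/imsetP; exists (a, b); rewrite // inE /long_pair ab. Qed.

Lemma seed_short (a b : 'I_n) :
  ~~ odd r -> b = a.+1 :> nat -> odd a -> a <= M -> [set a; b] \in seed.
Proof.
move=> er ba oa aM; apply/imsetP; exists (a, b) => //.
by rewrite inE /short_pair er ba eqxx oa aM orbT.
Qed.

Lemma seed_sub : seed \subset K_edges setT.
Proof.
apply/subsetP => _ /imsetP[[a b] + ->]; rewrite inE set2_K_edges !inE /=.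
case/orP=> [ab|/and4P[_ /eqP ba _ _]]; apply/eqP => eab; subst b.
  by move: ab; rewrite /long_pair /=; lia.
by move: ba => /=; lia.
Qed.

Lemma set2_tail s (a b : 'I_n) : ([set a; b] \in K_edges (tail s)) = [&& s <= a, s <= b & a != b].
Proof. by rewrite set2_K_edges !inE. Qed.

Lemma short_partner s (x y : 'I_n) : x = s :> nat -> s < y -> [set x; y] \notin seed ->
  exists2 Z : {set 'I_n}, (~~ odd r && (y <= M)) <= #|Z| &
    forall z, z \in Z -> [/\ s <= z, z <= y.+1, z != x, z != y & [set y; z] \in seed].
Proof.
move=> xs sy xy_seed.
have [/andP[er yM]|_] := boolP (~~ odd r && (y <= M)); last by exists set0 => // z; rewrite inE.
suff [z [sz zy zx zy' yz_seed]] :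
    exists z : 'I_n, [/\ s <= z, z <= y.+1, z != x, z != y & [set y; z] \in seed].
  by exists [set z]; rewrite ?cards1 // => _ /set1P ->.
have [oy|ey] := boolP (odd y).
  have yn : y.+1 < n by lia.
  exists (Ordinal yn); split=> /=; try lia.
  - by apply/eqP => /(congr1 (@nat_of_ord n)) /=; lia.
  - by apply/eqP => /(congr1 (@nat_of_ord n)) /=; lia.
  - exact: seed_short.
have yn : y.-1 < n by lia.
have zy_seed : [set Ordinal yn; y] \in seed.
  by apply: seed_short => //=; [lia | move: ey; case: (nat_of_ord y) sy => //= k _ /negPn | lia].
exists (Ordinal yn); split=> /=; try lia.
- by apply: contraNneq xy_seed => <-.
- by apply/eqP => /(congr1 (@nat_of_ord n)) /=; lia.
- by rewrite setUC.
Qed.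

Lemma tail_min_count s j : s < j -> j < s + D ->
  r - 2 * s <= (j - s.+1) + (n - (s + D)) + ((n - (j + D)) + (~~ odd r && (j <= M))).
Proof. by move=> sj jD; have := modn2 r; case: (odd r) => /= r2; [|case: leqP => /=]; lia. Qed.

Lemma lineK_iter_tail_min s (x y : 'I_n) : x = s :> nat -> s < y ->
  [set x; y] \in lineK_iter (tail s) (r - 2 * s) (seed_from s) (y - s).
Proof.
move=> xs; move jE : (nat_of_ord y) => j; elim/ltn_ind: j y jE => j IHj y yj sj.
have jn : j < n by rewrite -yj ltn_ord.
have xy : x != y by apply/eqP => /(congr1 (@nat_of_ord n)); lia.
have xy_tail : [set x; y] \in K_edges (tail s) by rewrite set2_tail xy xs yj leqnn ltnW.
have [xy_seed|xy_seed] := boolP ([set x; y] \in seed).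
  by apply: (subsetP (sub_lineK_iter _ _ _ _)); rewrite inE xy_seed.
have jD : j < s + D.
  by rewrite ltnNge; apply: contra xy_seed => sDj; apply: seed_long; lia.
have sy : s < y by rewrite yj.
have [Z4 cZ4 Z4P] := short_partner xs sy xy_seed.
rewrite (_ : j - s = (j - s.+1).+1); last lia.
rewrite lineK_iterS; apply/setUP; right; rewrite inE xy_tail /=.
set Zx := [set z : 'I_n | s < z < j] :|: [set z : 'I_n | s + D <= z].
set Zy := [set z : 'I_n | j + D <= z] :|: Z4.
have xZ : x \notin Zx :|: Zy.
  have xZ4 : x \notin Z4 by apply/negP => /Z4P[_ _ /negP].
  by rewrite !inE xs (negbTE xZ4) orbF; lia.
have yZ : y \notin Zx :|: Zy.
  have yZ4 : y \notin Z4 by apply/negP => /Z4P[_ _ _ /negP].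
  by rewrite !inE yj (negbTE yZ4) orbF; lia.
apply: leq_trans (card_line_adj_stars xy xZ yZ _ _).
- rewrite cardsU_disj => [|z]; last by rewrite !inE; lia.
  rewrite cardsU_disj => [|z]; last by rewrite inE => jDz; apply/negP => /Z4P[]; lia.
  rewrite card_ord_range !card_ord_ge (minn_idPl (ltnW jn)).
  by apply: leq_trans (tail_min_count sj jD) _; rewrite !leq_add2l -yj.
- move=> z zZx; have xz : x != z by apply: contraNneq xZ => ->; rewrite inE zZx.
  move: zZx; rewrite !inE => /orP[/andP[sz zj]|sDz].
    apply: (subsetP (lineK_iter_mono _ _ _ (_ : z - s <= j - s.+1))); first lia.
    exact: IHj.
  apply: (subsetP (sub_lineK_iter _ _ _ _)).
  by rewrite inE seed_long ?xs // set2_tail xs leqnn xz /=; lia.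
- move=> z zZy; have yz : y != z by apply: contraNneq yZ => ->; rewrite inE zZy orbT.
  apply: (subsetP (sub_lineK_iter _ _ _ _)); rewrite inE set2_tail yj ltnW // yz andbT.
  move: zZy; rewrite !inE => /orP[jDz|/Z4P[sz _ _ _ ->]]; last by rewrite sz.
  by rewrite seed_long ?yj //; lia.
Qed.

Lemma seed_from_percolating s : lineK_percolating (tail s) (r - 2 * s) (seed_from s).
Proof.
have [t] := ubnP (n - s); elim: t s => // t IHt s st.
have [sn|ns] := ltnP s n; last first.
  move=> e /K_edgesP[esub /eqP/cards2P[a [b [_ eab]]]].
  by have := subsetP esub a; rewrite eab !inE eqxx => /(_ isT); move: (ltn_ord a); lia.
pose x := Ordinal sn.
apply: (@lineK_percolating_del1 _ _ x _ _ n).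
  move=> y; rewrite inE => sy yx.
  have sy' : s < y.
    rewrite ltn_neqAle sy andbT; by apply: contraNneq yx => sE; apply/eqP/ord_inj; rewrite -sE.
  apply: (subsetP (lineK_iter_mono _ _ _ (leq_trans (leq_subr s y) (ltnW (ltn_ord y))))).
  exact: lineK_iter_tail_min.
have -> : tail s :\ x = tail s.+1.
  apply/setP => z; rewrite !inE; apply/andP/idP => [[zx sz]|sz].
    rewrite ltn_neqAle sz andbT; apply: contraNneq zx => sE.
    by apply/eqP/ord_inj; rewrite -sE.
  by split; [apply: contraTneq sz => ->; rewrite /= ltnn | exact: ltnW].
have -> : seed_from s :&: K_edges (tail s.+1) = seed_from s.+1.
  rewrite -setIA; congr (_ :&: _); apply/setIidPr/K_edgesS.
  by apply/subsetP => z; rewrite !inE => /ltnW.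
rewrite (_ : r - 2 * s - 2 = r - 2 * s.+1); last lia.
by apply: IHt; lia.
Qed.

Lemma seed_percolating : lineK_percolating setT r seed.
Proof.
have := seed_from_percolating (s := 0); rewrite muln0 subn0.
have -> : tail 0 = setT by apply/setP => z; rewrite !inE.
by rewrite /seed_from; move/setIidPl: seed_sub ->.
Qed.

Lemma card_long_pairs : #|[set p | long_pair p]| <= 'C(M.+1, 2).
Proof.
pose lo (p : 'I_n * 'I_n) : 'I_M.+1 := inord p.1.
pose hi (p : 'I_n * 'I_n) : 'I_M.+1 := inord (p.2 - D).+1.
have lohi p : long_pair p ->
    [/\ lo p = p.1 :> nat, hi p = (p.2 - D).+1 :> nat, D <= p.2 & lo p < hi p].
  rewrite /long_pair => pl; have p2n := ltn_ord p.2.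
  have e1 : lo p = p.1 :> nat by rewrite inordK //; lia.
  have e2 : hi p = (p.2 - D).+1 :> nat by rewrite inordK //; lia.
  by split; rewrite // ?e1 ?e2; lia.
clearbody lo hi.
rewrite -[M.+1]card_ord -card_draws -(@card_in_imset _ _ (fun p => [set lo p; hi p])).
  apply/subset_leq_card/subsetP => _ /imsetP[p + ->]; rewrite !inE => /lohi[_ _ _ lt].
  by rewrite cards2 neq_ltn lt.
move=> [a b] [c d]; rewrite !inE => /lohi[la hb Db ab] /lohi[lc hd Dd cd].
move=> /(set2_ltn_inj ab cd)[/(congr1 (@nat_of_ord _)) e1 /(congr1 (@nat_of_ord _)) e2].
by congr (_, _); apply: ord_inj; move: la hb lc hd e1 e2 Db Dd => /=; lia.
Qed.

Lemma card_short_pairs : #|[set p | short_pair p]| <= ~~ odd r * uphalf M.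
Proof.
have [or|er] := boolP (odd r).
  rewrite (_ : [set p | short_pair p] = set0) ?cards0 //.
  by apply/setP => p; rewrite !inE /short_pair or.
rewrite mul1n -(@card_in_imset _ _ fst).
  apply: leq_trans (card_ord_odd_le n M); apply/subset_leq_card/subsetP => _ /imsetP[p + ->].
  by rewrite !inE => /and4P[_ _ -> ->].
move=> [a b] [c d]; rewrite !inE => /and4P[_ /eqP ba _ _] /and4P[_ /eqP dc _ _] /= ac.
by rewrite ac; congr (_, _); apply: ord_inj; rewrite ba dc ac.
Qed.

Lemma card_seed : #|seed| <= mLK_large r.
Proof.
apply: leq_trans (leq_imset_card _ _) (leq_trans _ (bin2_uphalf_le r)).
rewrite (_ : [set p | long_pair p || short_pair p] = [set p | long_pair p] :|: [set p | short_pair p]).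
  exact: leq_trans (leq_card_setU _ _).1 (leq_add card_long_pairs card_short_pairs).
by apply/setP => p; rewrite !inE.
Qed.
End Construction.

Section LineGraphOfK.
Variable n : nat.
Local Notation V := (line_vertex (@K_rel n)).
Local Notation adj := (@line_rel _ (@K_rel n)).

Definition edge_set (X : {set V}) : {set {set 'I_n}} := [set val v | v in X].

Lemma is_edge_K (e : {set 'I_n}) : is_edge (@K_rel n) e = (e \in K_edges setT).
Proof.
rewrite inE subsetT /=; apply/existsP/cards2P => [[x /existsP[y /andP[xy /eqP ->]]]|[x [y [xy ->]]]].
  by exists x, y.
by exists x; apply/existsP; exists y; rewrite /K_rel xy eqxx.
Qed.

Lemma val_K_edges (v : V) : val v \in K_edges setT.
Proof. by rewrite -is_edge_K (valP v). Qed.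

Lemma card_edge_set X : #|edge_set X| = #|X|.
Proof. exact/card_imset/val_inj. Qed.

Lemma edge_set_sub X : edge_set X \subset K_edges setT.
Proof. by apply/subsetP => _ /imsetP[v _ ->]; apply: val_K_edges. Qed.

Lemma edge_set_comp (P : pred V) (Q : pred {set 'I_n}) :
  (forall v, P v = Q (val v)) -> edge_set [set v | P v] = [set e in K_edges setT | Q e].
Proof.
move=> PQ; apply/setP => e; rewrite inE; apply/imsetP/andP => [[v]|[eK Qe]].
  by rewrite inE PQ => Qv ->; rewrite val_K_edges.
by exists (exist _ e (etrans (is_edge_K e) eK)); rewrite // inE PQ.
Qed.

Lemma edge_setK (H : {set {set 'I_n}}) :
  H \subset K_edges setT -> edge_set [set v | val v \in H] = H.
Proof.
move=> HK; rewrite (@edge_set_comp _ (mem H)) //.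
by apply/setP => e; rewrite inE andb_idl // => /(subsetP HK).
Qed.

Lemma edge_setT : edge_set [set: V] = K_edges setT.
Proof.
apply/setP => e; apply/imsetP/idP => [[v _ ->]|eK]; first exact: val_K_edges.
by exists (exist _ e (etrans (is_edge_K e) eK)); rewrite ?inE.
Qed.

Lemma card_line_rel_nbrs (X : {set V}) (v : V) :
  #|[set u | adj v u & u \in X]| = #|[set f in edge_set X | line_adj (val v) f]|.
Proof.
rewrite -(card_imset _ val_inj); apply: eq_card => f; apply/imsetP/idP => [[u]|].
  by rewrite !inE => /andP[vu uX] ->; rewrite imset_f.
by rewrite inE => /andP[/imsetP[u uX ->] vu]; exists u; rewrite // inE uX andbT.
Qed.

Lemma edge_set_step r X : edge_set (bp_step adj r X) = lineK_step setT r (edge_set X).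
Proof.
rewrite /bp_step /edge_set imsetU; congr (_ :|: _).
by apply: edge_set_comp => v; rewrite card_line_rel_nbrs.
Qed.

Lemma edge_set_iter r X k : edge_set (bp_iter adj r X k) = lineK_iter setT r (edge_set X) k.
Proof. by elim: k => [//|k IHk]; rewrite /= edge_set_step IHk. Qed.

Lemma percolating_edge_set r X : percolating adj r X <-> lineK_percolating setT r (edge_set X).
Proof.
split=> [percX e eK|percX v].
  have [k vk] := percX (exist _ e (etrans (is_edge_K e) eK)).
  by exists k; rewrite -edge_set_iter; exact: (imset_f val vk).
have [k] := percX (val v) (val_K_edges v).
by rewrite -edge_set_iter => /imsetP[u uk /val_inj ->]; exists k.
Qed.

End LineGraphOfK.

Theorem theorem5p4 (n r : nat) (hn : 0 < n) (hr : 0 < r) :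
  min_percolating_size (@line_rel _ (@K_rel n)) r
    (if (r.+1 %/ 2).+2 <= n then (r + 2) ^ 2 %/ 8 else 'C(n, 2)).
Proof.
have cT : #|[set: 'I_n]| = n by rewrite cardsT card_ord.
change (min_percolating_size (@line_rel _ (@K_rel n)) r (mLK r n)).
split; last first.
  move=> X /percolating_edge_set percX; rewrite -card_edge_set -[n in mLK r n]cT.
  exact: lineK_percolating_card (edge_set_sub X) percX.
have [large|small] := boolP ((r.+1 %/ 2).+2 <= n).
  exists [set v | val v \in seed n r].
  rewrite percolating_edge_set -card_edge_set edge_setK ?seed_sub //.
  split; first exact: seed_percolating.
  apply/eqP; rewrite eqn_leq {1}/mLK large card_seed //=.
  by rewrite -{1}cT; exact: lineK_percolating_card (seed_sub large) (seed_percolating large).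
exists setT; split; first by move=> v; exists 0; rewrite /bp_iter /= inE.
by rewrite -card_edge_set edge_setT cards_draws cT /mLK (negbTE small).
Qed.
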